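(* Let $\lambda_1,\lambda_2>0$ and let the input domain be the set of integers $\mathbb{Z}$. Let $\mathcal{M}_{\mathrm{skell}(\lambda_1,\lambda_2)}$ be the algorithm that adds to its input a random integer with the Skellam$(\lambda_1,\lambda_2)$ distribution, and let $f_Z(\cdot;\lambda_1,\lambda_2)$ be the probability mass function of that distribution. A bounded row vector $\vec x=(\dots,x_{-2},x_{-1},x_0,x_1,x_2,\dots)$ belongs to $\mathrm{rowcone}(\{\mathcal{M}_{\mathrm{skell}(\lambda_1,\lambda_2)}\})$ if for all integers $k$, $$\sum_{j=-\infty}^{\infty}(-1)^j f_Z(j;\lambda_1,\lambda_2)\,x_{k+j}\ \ge\ 0.$$
   Context: A random variable has the Skellam$(\lambda_1,\lambda_2)$ distribution if it equals $X-Y$ with $X,Y$ independent, $X\sim$ Poisson$(\lambda_1)$ and $Y\sim$ Poisson$(\lambda_2)$ (Poisson$(\lambda)$ has mass $e^{-\lambda}\lambda^k/k!$ on nonnegative integers $k$). An algorithm is identified with its output probabilities. For algorithms $\mathcal{M}$, $\mathcal{A}$ with $\mathrm{range}(\mathcal{M})\subseteq\mathrm{domain}(\mathcal{A})$ and independent randomness, $\mathcal{A}\circ\mathcal{M}$ runs $\mathcal{M}$ then $\mathcal{A}$ on its output. $\mathrm{CNF}(\mathrm{Priv})$ of a set of algorithms with domain $\mathbb{Z}$ is the smallest set $S$ containing $\mathrm{Priv}$ such that $\mathcal{M}\in S$ implies $\mathcal{A}\circ\mathcal{M}\in S$ for every such $\mathcal{A}$, and $\mathcal{M}_1,\mathcal{M}_2\in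 S$, $t\in[0,1]$ implies that the algorithm running $\mathcal{M}_1$ with probability $t$ and $\mathcal{M}_2$ with probability $1-t$ is in $S$. $\mathrm{rowcone}(\mathrm{Priv})=\{(c\,P[\mathcal{M}(n)=\omega])_{n\in\mathbb{Z}} : c\ge0,\ \mathcal{M}\in\mathrm{CNF}(\mathrm{Priv}),\ \omega\in\mathrm{range}(\mathcal{M})\}$. *)

From Stdlib Require Import Reals ZArith.
From Coquelicot Require Import Coquelicot.
Open Scope R_scope.

Definition is_sumZ (f : Z -> R) (l : R) : Prop :=
  exists a b : R,
    is_series (fun k : nat => f (Z.of_nat k)) a /\
    is_series (fun k : nat => f (- Z.of_nat (S k))%Z) b /\
    a + b = l.

Definition sumZ (f : Z -> R) : R :=
  Series (fun k : nat => f (Z.of_nat k)) +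
  Series (fun k : nat => f (- Z.of_nat (S k))%Z).

Definition poisson_pmf (lam : R) (z : Z) : R :=
  if (z <? 0)%Z then 0
  else exp (- lam) * lam ^ (Z.to_nat z) / INR (fact (Z.to_nat z)).

(* Skellam(l1,l2) mass: P[X - Y = j] = sum_{k>=0} P[X = k + j] P[Y = k]. *)
Definition skellam_pmf (l1 l2 : R) (j : Z) : R :=
  Series (fun k : nat => poisson_pmf l1 (Z.of_nat k + j)%Z * poisson_pmf l2 (Z.of_nat k)).

(* An algorithm with input domain Z and (discrete) outputs encoded in Z,
   identified with its output probabilities: alg n w = P[M(n) = w]. *)
Definition alg := Z -> Z -> R.

Definition is_dist (p : Z -> R) : Prop :=
  (forall w, 0 <= p w) /\ is_sumZ p 1.

Definition is_alg (M : alg) : Prop := forall n, is_dist (M n).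

(* Post-processing A o M, where A : Z -> Z -> R maps an output t of M
   to a distribution A t on outputs. *)
Definition postproc (A : alg) (M : alg) : alg :=
  fun n u => sumZ (fun t => M n t * A t u).

Definition mixture (t : R) (M1 M2 : alg) : alg :=
  fun n w => t * M1 n w + (1 - t) * M2 n w.

Inductive CNF (Priv : alg -> Prop) : alg -> Prop :=
| CNF_base : forall M, Priv M -> CNF Priv M
| CNF_post : forall A M, is_alg A -> CNF Priv M -> CNF Priv (postproc A M)
| CNF_mix : forall t M1 M2, 0 <= t <= 1 -> CNF Priv M1 -> CNF Priv M2 ->
    CNF Priv (mixture t M1 M2).

Definition rowcone (Priv : alg -> Prop) (x : Z -> R) : Prop :=
  exists (c : R) (M : alg) (w : Z),
    0 <= c /\ CNF Priv M /\ (exists n, 0 < M n w) /\ forall n, x n = c * M n w.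

Definition skellam_mech (l1 l2 : R) : alg :=
  fun n w => skellam_pmf l1 l2 (w - n)%Z.

Definition sgnZ (j : Z) : R := if Z.even j then 1 else -1.

(* The probability generating function of Skellam(l1,l2) is
   F(z) = exp (l1 (z - 1) + l2 (1/z - 1)), and that of the signed mass
   j |-> (-1)^j f(j) is F(-z); their product is the constant exp (-2 (l1 + l2)).
   Hence convolving the alternating transform T(k) = sum_j (-1)^j f(j) x(k+j)
   with f returns exp (-2 (l1 + l2)) x.  If T >= 0, then T <= B for a bound B
   of |x|, and post-processing the Skellam mechanism with the kernel that
   outputs 0 with probability T(t) / (B + 1) gives a mechanism whose
   probability of output 0 on input n is exp (-2 (l1 + l2)) x(n) / (B + 1):
   x is a nonnegative multiple of one of its rows.  The series identities are
   all reduced to double series over nat, indexed by the two Poisson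
   variables X and Y with X - Y ~ Skellam. *)

From Stdlib Require Import Reals ZArith Lia Lra Classical.
From Coquelicot Require Import Coquelicot.
Open Scope R_scope.

Lemma Series_Un_cv (a : nat -> R) : ex_series a -> Un_cv (sum_f_R0 a) (Series a).
Proof. intro H. apply Series_correct in H. apply is_series_Reals in H. exact H. Qed.

Lemma sum_f_R0_le_Series (a : nat -> R) N : (forall n, 0 <= a n) -> ex_series a ->
  sum_f_R0 a N <= Series a.
Proof. intros Hp H. apply sum_incr; auto. apply Series_Un_cv; auto. Qed.

Lemma Series_ge0 (a : nat -> R) : (forall n, 0 <= a n) -> ex_series a -> 0 <= Series a.
Proof.
  intros Hp H. eapply Rle_trans; [|apply (sum_f_R0_le_Series a 0); auto]. simpl. auto.
Qed.

Lemma term_le_sum_f_R0 (a : nat -> R) m : (forall n, 0 <= a n) -> a m <= sum_f_R0 a m.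
Proof.
  intros Hp. destruct m; simpl. lra.
  pose proof (cond_pos_sum a m Hp). lra.
Qed.

Lemma term_le_Series (a : nat -> R) m : (forall n, 0 <= a n) -> ex_series a -> a m <= Series a.
Proof. intros. eapply Rle_trans. apply term_le_sum_f_R0; auto. apply sum_f_R0_le_Series; auto. Qed.

Lemma ex_series_bounded_sums (a : nat -> R) B : (forall n, 0 <= a n) ->
  (forall N, sum_f_R0 a N <= B) -> ex_series a /\ Series a <= B.
Proof.
  intros Hp HB.
  assert (Hg : Un_growing (sum_f_R0 a)).
  { intro n. simpl. specialize (Hp (S n)). lra. }
  assert (Hu : has_ub (sum_f_R0 a)).
  { exists B. intros y [n ->]. auto. }
  destruct (growing_cv _ Hg Hu) as [l Hl].
  assert (He : ex_series a).
  { apply ex_series_Reals_1. exists l. exact Hl. }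
  split; auto.
  apply (Rle_cv_lim (Un := sum_f_R0 a) (Vn := fun _ => B)); auto.
  apply Series_Un_cv; auto.
  intros e He'. exists O. intros. unfold Rdist. rewrite Rminus_diag, Rabs_R0. lra.
Qed.

(* Coquelicot's lemmas on [ex_series] over a generic normed module do not
   unify with series in [R] without naming the module. *)
Lemma ex_series_le_R (a b : nat -> R) : (forall n, Rabs (a n) <= b n) -> ex_series b -> ex_series a.
Proof. intros. apply (ex_series_le (V:=R_CompleteNormedModule)) with b; auto. Qed.

Lemma ex_series_scal_R (c : R) (a : nat -> R) : ex_series a -> ex_series (fun n => c * a n).
Proof. intros. apply (ex_series_scal_l (V:=R_NormedModule) c a); auto. Qed.

Lemma ex_series_ext_R (a b : nat -> R) : (forall n, a n = b n) -> ex_series a -> ex_series b.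
Proof. intros. apply (ex_series_ext (V:=R_NormedModule) a b); auto. Qed.

Lemma Series_sum_f_R0_comm (a : nat -> nat -> R) M :
  (forall m, ex_series (fun n => a n m)) ->
  Series (fun n => sum_f_R0 (fun m => a n m) M) = sum_f_R0 (fun m => Series (fun n => a n m)) M.
Proof.
  intros H. induction M; simpl.
  - reflexivity.
  - rewrite Series_plus; auto. rewrite IHM; auto.
    clear IHM. induction M; simpl. auto.
    apply (ex_series_plus (V:=R_NormedModule)); auto.
Qed.

Lemma Series_comm_nonneg_le (a : nat -> nat -> R) : (forall n m, 0 <= a n m) ->
  (forall n, ex_series (a n)) -> ex_series (fun n => Series (a n)) ->
  (forall m, ex_series (fun n => a n m)) /\ ex_series (fun m => Series (fun n => a n m)) /\
  Series (fun m => Series (fun n => a n m)) <= Series (fun n => Series (a n)).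
Proof.
  intros Hp Hr Hs.
  assert (Hc : forall m, ex_series (fun n => a n m)).
  { intro m. apply (proj1 (ex_series_bounded_sums _ (Series (fun n => Series (a n))) (fun n => Hp n m) ltac:(
      intro N; eapply Rle_trans; [apply sum_growing; intro n; apply (term_le_Series (a n) m); auto|];
      apply sum_f_R0_le_Series; auto; intro; apply Series_ge0; auto))). }
  assert (Hb : forall M, sum_f_R0 (fun m => Series (fun n => a n m)) M <= Series (fun n => Series (a n))).
  { intro M. rewrite <- Series_sum_f_R0_comm; auto. apply Series_le; auto.
    intro n. split. apply cond_pos_sum. auto. apply sum_f_R0_le_Series; auto. }
  destruct (ex_series_bounded_sums _ _ (fun m => Series_ge0 _ (fun n => Hp n m) (Hc m)) Hb) as [E L].
  auto.
Qed.

Lemma Series_comm_nonneg (a : nat -> nat -> R) : (forall n m, 0 <= a n m) ->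
  (forall n, ex_series (a n)) -> ex_series (fun n => Series (a n)) ->
  (forall m, ex_series (fun n => a n m)) /\ ex_series (fun m => Series (fun n => a n m)) /\
  Series (fun m => Series (fun n => a n m)) = Series (fun n => Series (a n)).
Proof.
  intros Hp Hr Hs.
  destruct (Series_comm_nonneg_le a Hp Hr Hs) as [Hc [Hcs L1]].
  destruct (Series_comm_nonneg_le (fun m n => a n m) (fun m n => Hp n m) Hc Hcs) as [_ [_ L2]].
  split; [auto|split; [auto|]]. apply Rle_antisym; auto.
Qed.

Lemma Series_comm_dominated (a Mj : nat -> nat -> R) : (forall n m, Rabs (a n m) <= Mj n m) ->
  (forall n, ex_series (Mj n)) -> ex_series (fun n => Series (Mj n)) ->
  Series (fun n => Series (a n)) = Series (fun m => Series (fun n => a n m)).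
Proof.
  intros HM Hr Hs.
  assert (Hp : forall n m, 0 <= Mj n m). { intros. eapply Rle_trans; [apply Rabs_pos|apply HM]. }
  set (Q := fun n m => Mj n m + a n m).
  assert (HQ : forall n m, 0 <= Q n m <= 2 * Mj n m).
  { intros. unfold Q. specialize (HM n m). apply Rabs_le_between in HM. lra. }
  assert (HQr : forall n, ex_series (Q n)).
  { intro n. apply ex_series_le_R with (fun m => 2 * Mj n m).
    intro m. rewrite (Rabs_pos_eq (Q n m)) by apply HQ. apply HQ.
    apply ex_series_scal_R; auto. }
  assert (HQs : ex_series (fun n => Series (Q n))).
  { apply ex_series_le_R with (fun n => 2 * Series (Mj n)).
    intro n. rewrite Rabs_pos_eq.
    rewrite <- Series_scal_l. apply Series_le. intro; apply HQ.
    apply ex_series_scal_R; auto.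
    apply Series_ge0. intro; apply HQ. auto.
    apply ex_series_scal_R; auto. }
  destruct (Series_comm_nonneg Q ltac:(intros; apply HQ) HQr HQs) as [HQc [HQcs EQ]].
  destruct (Series_comm_nonneg Mj Hp Hr Hs) as [HMc [HMcs EM]].
  transitivity (Series (fun n => Series (Q n) - Series (Mj n))).
  { apply Series_ext. intro n. rewrite <- Series_minus; auto. apply Series_ext. intro; unfold Q; ring. }
  rewrite Series_minus; auto.
  transitivity (Series (fun m => Series (fun n => Q n m) - Series (fun n => Mj n m))).
  2:{ apply Series_ext. intro m. rewrite <- Series_minus; auto. apply Series_ext. intro; unfold Q; ring. }
  rewrite Series_minus; auto. rewrite EQ, EM. reflexivity.
Qed.

Lemma sum_f_R0_eventually_zero (a : nat -> R) N : (forall k, (N < k)%nat -> a k = 0) ->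
  forall n, (N <= n)%nat -> sum_f_R0 a n = sum_f_R0 a N.
Proof.
  intros H n Hn. induction n.
  - assert (N = 0)%nat by lia. subst. reflexivity.
  - destruct (Nat.eq_dec N (S n)) as [->|Hne]. reflexivity.
    simpl. rewrite IHn by lia. rewrite H by lia. ring.
Qed.

Lemma is_series_eventually_zero (a : nat -> R) N : (forall k, (N < k)%nat -> a k = 0) ->
  is_series a (sum_f_R0 a N).
Proof.
  intros H. apply is_series_Reals. intros e He. exists N. intros n Hn.
  rewrite (sum_f_R0_eventually_zero a N H n Hn). unfold Rdist.
  replace (_ - _) with 0 by ring. rewrite Rabs_R0. lra.
Qed.

Lemma Series_eventually_zero (a : nat -> R) N : (forall k, (N < k)%nat -> a k = 0) ->
  Series a = sum_f_R0 a N.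
Proof. intros H. apply is_series_unique. apply is_series_eventually_zero; auto. Qed.

Lemma Rabs_Series_le (a w : nat -> R) : (forall n, Rabs (a n) <= w n) -> ex_series w ->
  Rabs (Series a) <= Series w.
Proof.
  intros H Hw. eapply Rle_trans. apply Series_Rabs.
  apply ex_series_le_R with w; auto. intro; rewrite Rabs_Rabsolu; auto.
  apply Series_le; auto. intro; split; auto. apply Rabs_pos.
Qed.

Lemma ex_series_dominated (a Mj : nat -> nat -> R) : (forall n m, Rabs (a n m) <= Mj n m) ->
  (forall n, ex_series (Mj n)) -> ex_series (fun n => Series (Mj n)) ->
  (forall n, ex_series (a n)) /\ ex_series (fun n => Series (a n)).
Proof.
  intros HM Hr Hs. split.
  - intro n. apply ex_series_le_R with (Mj n); auto.
  - apply ex_series_le_R with (fun n => Series (Mj n)); auto. intro n. apply Rabs_Series_le; auto.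
Qed.

Lemma Series_comm_product_dominated (a : nat -> nat -> R) (Bd : R) (u v : nat -> R) : 0 <= Bd ->
  (forall n, 0 <= u n) -> (forall m, 0 <= v m) -> ex_series u -> ex_series v ->
  (forall n m, Rabs (a n m) <= Bd * u n * v m) ->
  Series (fun n => Series (a n)) = Series (fun m => Series (fun n => a n m)).
Proof.
  intros HB Hu Hv Eu Ev H. apply Series_comm_dominated with (fun n m => Bd * u n * v m); auto.
  - intro n. apply ex_series_scal_R; auto.
  - apply ex_series_ext_R with (fun n => Series v * Bd * u n).
    intro n. rewrite Series_scal_l. ring. apply ex_series_scal_R; auto.
Qed.

Lemma ex_series_product_dominated (a : nat -> nat -> R) (Bd : R) (u v : nat -> R) : 0 <= Bd ->
  (forall n, 0 <= u n) -> (forall m, 0 <= v m) -> ex_series u -> ex_series v ->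
  (forall n m, Rabs (a n m) <= Bd * u n * v m) ->
  (forall n, ex_series (a n)) /\ ex_series (fun n => Series (a n)).
Proof.
  intros HB Hu Hv Eu Ev H. apply ex_series_dominated with (fun n m => Bd * u n * v m); auto.
  - intro n. apply ex_series_scal_R; auto.
  - apply ex_series_ext_R with (fun n => Series v * Bd * u n).
    intro n. rewrite Series_scal_l. ring. apply ex_series_scal_R; auto.
Qed.

Lemma Series_comm_row_dominated (a : nat -> nat -> R) Bd (u : nat -> R) (w : nat -> nat -> R) :
  0 <= Bd -> (forall n, 0 <= u n) -> ex_series u -> (forall n, ex_series (w n)) ->
  (forall n m, 0 <= w n m) -> (forall n, Series (w n) <= 1) ->
  (forall n m, Rabs (a n m) <= Bd * u n * w n m) ->
  Series (fun n => Series (a n)) = Series (fun m => Series (fun n => a n m)).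
Proof.
  intros HB Hu Eu Ew Hw Sw H. apply Series_comm_dominated with (fun n m => Bd * u n * w n m); auto.
  - intro n. apply ex_series_scal_R; auto.
  - apply ex_series_le_R with (fun n => Bd * u n).
    + intro n. rewrite Series_scal_l. rewrite Rabs_pos_eq.
      rewrite <- (Rmult_1_r (Bd * u n)) at 2. apply Rmult_le_compat_l; auto.
      apply Rmult_le_pos; auto.
      apply Rmult_le_pos; [apply Rmult_le_pos; auto|]. apply Series_ge0; auto.
    + apply ex_series_scal_R; auto.
Qed.

Lemma ex_series_column_sums (u : nat -> R) (w : nat -> nat -> R) :
  (forall n, 0 <= u n) -> ex_series u -> (forall n, ex_series (w n)) ->
  (forall n m, 0 <= w n m) -> (forall n, Series (w n) <= 1) ->
  ex_series (fun m => Series (fun n => u n * w n m)).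
Proof.
  intros Hu Eu Ew Hw Sw.
  assert (Hr : forall n, ex_series (fun m => u n * w n m)).
  { intro n. apply ex_series_scal_R; auto. }
  refine (proj1 (proj2 (Series_comm_nonneg (fun n m => u n * w n m) _ Hr _))).
  - intros; apply Rmult_le_pos; auto.
  - apply ex_series_le_R with u; auto. intro n.
    rewrite Rabs_pos_eq by (apply Series_ge0; auto; intro; apply Rmult_le_pos; auto).
    rewrite Series_scal_l. rewrite <- (Rmult_1_r (u n)) at 2. apply Rmult_le_compat_l; auto.
Qed.

Lemma Series_split_triangles (h : nat -> nat -> R) (Bd : R) (u v : nat -> R) : 0 <= Bd ->
  (forall n, 0 <= u n) -> (forall m, 0 <= v m) -> ex_series u -> ex_series v ->
  (forall a b, Rabs (h a b) <= Bd * u a * v b) ->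
  Series (fun a => Series (h a)) =
  Series (fun b => Series (fun j => h (b + j)%nat b)) +
  Series (fun a => Series (fun i => h a (S a + i)%nat)).
Proof.
  intros HB Hu Hv Eu Ev Hh.
  set (E1 := fun a b => if (b <=? a)%nat then h a b else 0).
  set (E2 := fun a b => if (b <=? a)%nat then 0 else h a b).
  assert (HE : forall a b, Rabs (E1 a b) <= Bd * v b * u a /\ Rabs (E2 a b) <= Bd * v b * u a).
  { intros a b. assert (0 <= Bd * v b * u a) by (apply Rmult_le_pos; [apply Rmult_le_pos|]; auto).
    unfold E1, E2. destruct (b <=? a)%nat; rewrite ?Rabs_R0; split; auto;
      rewrite Hh; right; ring. }
  destruct (ex_series_product_dominated (fun b a => E1 a b) Bd v u) as [R1 S1]; auto.
  { intros; apply HE. }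
  destruct (ex_series_product_dominated (fun b a => E2 a b) Bd v u) as [R2 S2]; auto.
  { intros; apply HE. }
  rewrite (Series_comm_product_dominated h Bd u v); auto.
  transitivity (Series (fun b => Series (fun a => E1 a b) + Series (fun a => E2 a b))).
  { apply Series_ext. intro b. rewrite <- Series_plus; auto. apply Series_ext. intro a.
    unfold E1, E2. destruct (b <=? a)%nat; ring. }
  rewrite Series_plus; auto. f_equal.
  - apply Series_ext. intro b. rewrite (Series_incr_n_aux (fun a => E1 a b) b).
    + apply Series_ext. intro j. unfold E1. destruct (Nat.leb_spec b (b + j)); auto; lia.
    + intros k Hk. unfold E1. destruct (Nat.leb_spec b k); auto; lia.
  - rewrite (Series_comm_product_dominated (fun b a => E2 a b) Bd v u); auto.
    2:{ intros; apply HE. }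
    apply Series_ext. intro a. rewrite (Series_incr_n_aux (fun b => E2 a b) (S a)).
    + apply Series_ext. intro i. unfold E2. destruct (Nat.leb_spec (S a + i) a); auto; lia.
    + intros k Hk. unfold E2. destruct (Nat.leb_spec k a); auto; lia.
Qed.

Definition poisson (l : R) (n : nat) : R := exp (- l) * l ^ n / INR (fact n).

Lemma is_series_poisson (l : R) : is_series (poisson l) 1.
Proof.
  pose proof (is_exp_Reals l) as H. unfold is_pseries in H.
  apply (is_series_scal_l (V:=R_NormedModule) (exp (-l))) in H.
  replace 1 with (scal (exp (-l)) (exp l)).
  eapply is_series_ext; [|exact H]. intro n. unfold poisson. simpl.
  change scal with Rmult. rewrite pow_n_pow. unfold Rdiv. ring.
  change scal with Rmult. rewrite <- exp_plus. replace (-l + l) with 0 by ring. apply exp_0.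
Qed.

Lemma ex_series_poisson l : ex_series (poisson l).
Proof. eexists. apply is_series_poisson. Qed.

Lemma Series_poisson l : Series (poisson l) = 1.
Proof. apply is_series_unique, is_series_poisson. Qed.

Lemma poisson_ge0 l n : 0 <= l -> 0 <= poisson l n.
Proof.
  intros. unfold poisson. apply Rmult_le_pos. apply Rmult_le_pos. left; apply exp_pos.
  apply pow_le; auto. left. apply Rinv_0_lt_compat. apply INR_fact_lt_0.
Qed.

Lemma poisson_le1 l n : 0 <= l -> poisson l n <= 1.
Proof.
  intros. rewrite <- (Series_poisson l). apply term_le_Series.
  intro; apply poisson_ge0; auto. apply ex_series_poisson.
Qed.

Lemma ex_series_poisson_shift l b : ex_series (fun j => poisson l (b + j)).
Proof. apply (ex_series_incr_n (V:=R_NormedModule) (poisson l) b). apply ex_series_poisson. Qed.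

Lemma Series_poisson_shift_le1 l b : 0 <= l -> Series (fun j => poisson l (b + j)) <= 1.
Proof.
  intros Hl. rewrite <- (Series_poisson l).
  transitivity (Series (fun a => if (b <=? a)%nat then poisson l a else 0)).
  - right. rewrite (Series_incr_n_aux (fun a => if (b <=? a)%nat then poisson l a else 0) b).
    + apply Series_ext. intro n. destruct (Nat.leb_spec b (b + n)); auto; lia.
    + intros k Hk. destruct (Nat.leb_spec b k); auto; lia.
  - apply Series_le. intro n. pose proof (poisson_ge0 l n Hl). destruct (b <=? n)%nat; lra.
    apply ex_series_poisson.
Qed.

Lemma ex_series_poisson_mul l (F : nat -> R) Bd : 0 <= l -> (forall a, Rabs (F a) <= Bd) ->
  ex_series (fun a => poisson l a * F a).
Proof.
  intros Hl H. apply ex_series_le_R with (fun a => Bd * poisson l a).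
  intro a. rewrite Rabs_mult, Rabs_pos_eq by (apply poisson_ge0; auto).
  pose proof (poisson_ge0 l a Hl). pose proof (H a). pose proof (Rabs_pos (F a)). nra.
  apply ex_series_scal_R, ex_series_poisson.
Qed.

Lemma Rabs_Series_poisson_mul_le l (F : nat -> R) Bd : 0 <= l -> (forall a, Rabs (F a) <= Bd) ->
  Rabs (Series (fun a => poisson l a * F a)) <= Bd.
Proof.
  intros Hl H. assert (HB : 0 <= Bd). { eapply Rle_trans; [apply Rabs_pos|apply (H O)]. }
  eapply Rle_trans. apply Rabs_Series_le with (w := fun a => Bd * poisson l a).
  intro a. rewrite Rabs_mult, Rabs_pos_eq by (apply poisson_ge0; auto).
  pose proof (poisson_ge0 l a Hl). pose proof (H a). pose proof (Rabs_pos (F a)). nra.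
  apply ex_series_scal_R, ex_series_poisson. rewrite Series_scal_l, Series_poisson. lra.
Qed.

Lemma Series_poisson_mul_ge0 l (F : nat -> R) Bd : 0 <= l -> (forall a, 0 <= F a <= Bd) ->
  0 <= Series (fun a => poisson l a * F a).
Proof.
  intros Hl H. apply Series_ge0. intro; apply Rmult_le_pos; [apply poisson_ge0; auto|apply H].
  apply ex_series_poisson_mul with Bd; auto. intro a. rewrite Rabs_pos_eq; apply H.
Qed.

Lemma Rabs_pow_m1 k : Rabs ((-1) ^ k) = 1.
Proof. rewrite <- RPow_abs. rewrite Rabs_m1. apply pow1. Qed.

Lemma poisson_mul_binomial l c s : (c <= s)%nat ->
  poisson l c * poisson l (s - c) = (exp (-l) * exp (-l) * l ^ s / INR (fact s)) * Binomial.C s c.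
Proof.
  intros H. unfold poisson, Binomial.C.
  replace (l ^ s) with (l ^ c * l ^ (s - c)) by (rewrite <- pow_add; f_equal; lia).
  pose proof (INR_fact_neq_0 c). pose proof (INR_fact_neq_0 (s - c)).
  pose proof (INR_fact_neq_0 s). field. auto.
Qed.

Lemma Series_antidiagonal (h : nat -> nat -> R) (Bd : R) (u v : nat -> R) : 0 <= Bd ->
  (forall n, 0 <= u n) -> (forall m, 0 <= v m) -> ex_series u -> ex_series v ->
  (forall c a, Rabs (h c a) <= Bd * u c * v a) ->
  Series (fun c => Series (h c)) = Series (fun s => sum_f_R0 (fun c => h c (s - c)%nat) s).
Proof.
  intros HB Hu Hv Eu Ev Hh.
  set (E := fun c s => if (c <=? s)%nat then h c (s - c)%nat else 0).
  set (Mj := fun c s => if (c <=? s)%nat then Bd * u c * v (s - c)%nat else 0).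
  assert (Hshift : forall (F : nat -> nat -> R) c,
    Series (fun s => if (c <=? s)%nat then F c (s - c)%nat else 0) = Series (F c)).
  { intros F c. rewrite (Series_incr_n_aux _ c).
    - apply Series_ext. intro k. destruct (Nat.leb_spec c (c + k)); [|lia].
      f_equal. lia.
    - intros k Hk. destruct (Nat.leb_spec c k); auto; lia. }
  assert (HMr : forall c, ex_series (Mj c)).
  { intro c. apply (ex_series_incr_n (V:=R_NormedModule) (Mj c) c).
    apply ex_series_ext_R with (fun k => (Bd * u c) * v k).
    - intro k. unfold Mj. destruct (Nat.leb_spec c (c + k)); [|lia]. do 2 f_equal. lia.
    - apply ex_series_scal_R; auto. }
  assert (HMs : forall c, Series (Mj c) = Series v * Bd * u c).
  { intro c. unfold Mj. rewrite (Hshift (fun c k => Bd * u c * v k)).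
    rewrite Series_scal_l. ring. }
  transitivity (Series (fun c => Series (E c))).
  { apply Series_ext. intro c. unfold E. rewrite (Hshift h). reflexivity. }
  rewrite (Series_comm_dominated E Mj); auto.
  - apply Series_ext. intro s. rewrite (Series_eventually_zero _ s).
    + apply sum_eq. intros c Hc. unfold E. destruct (Nat.leb_spec c s); auto; lia.
    + intros k Hk. unfold E. destruct (Nat.leb_spec k s); auto; lia.
  - intros c s. unfold E, Mj. destruct (c <=? s)%nat; auto.
    rewrite Rabs_R0. right; reflexivity.
  - apply ex_series_ext_R with (fun c => Series v * Bd * u c).
    + intro; rewrite HMs; auto.
    + apply ex_series_scal_R; auto.
Qed.

Lemma Series_poisson_alternating_conv l Bd (G : nat -> R) : 0 <= l -> (forall s, Rabs (G s) <= Bd) ->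
  Series (fun c => poisson l c * Series (fun a => (-1) ^ a * poisson l a * G (c + a)%nat))
  = exp (- (2 * l)) * G O.
Proof.
  intros Hl HG.
  replace (exp (- (2 * l))) with (exp (-l) * exp (-l)) by (rewrite <- exp_plus; f_equal; ring).
  assert (HB : 0 <= Bd). { eapply Rle_trans; [apply Rabs_pos|apply (HG O)]. }
  transitivity (Series (fun c => Series (fun a => poisson l c * ((-1) ^ a * poisson l a * G (c + a)%nat)))).
  { apply Series_ext. intro c. rewrite <- Series_scal_l. reflexivity. }
  rewrite (Series_antidiagonal _ Bd (poisson l) (poisson l)); auto using poisson_ge0, ex_series_poisson.
  2:{ intros c a. rewrite !Rabs_mult, Rabs_pow_m1, !Rabs_pos_eq by (apply poisson_ge0; auto).
      pose proof (HG (c + a)%nat). pose proof (poisson_ge0 l c Hl). pose proof (poisson_ge0 l a Hl).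
      replace (Bd * poisson l c * poisson l a) with (poisson l c * (1 * poisson l a * Bd)) by ring.
      apply Rmult_le_compat_l; auto. apply Rmult_le_compat_l; auto. apply Rmult_le_pos; lra. }
  (* By the binomial theorem the [s]-th antidiagonal is a multiple of (1 - 1)^s. *)
  transitivity (Series (fun s => (G s * (exp (-l) * exp (-l) * l ^ s / INR (fact s))) * (1 + -1) ^ s)).
  { apply Series_ext. intro s. rewrite binomial, scal_sum. apply sum_eq. intros c Hc.
    replace (c + (s - c))%nat with s by lia. rewrite pow1.
    replace (poisson l c * ((-1) ^ (s - c) * poisson l (s - c) * G s))
      with ((poisson l c * poisson l (s - c)) * ((-1) ^ (s - c) * G s)) by ring.
    rewrite poisson_mul_binomial by auto. ring. }
  rewrite (Series_eventually_zero _ 0). simpl. field.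
  intros k Hk. replace (1 + -1) with 0 by ring. rewrite pow_i by lia. ring.
Qed.

Lemma poisson_pmf_nat l n : poisson_pmf l (Z.of_nat n) = poisson l n.
Proof.
  unfold poisson_pmf, poisson. destruct (Z.ltb_spec (Z.of_nat n) 0). lia.
  rewrite Nat2Z.id. reflexivity.
Qed.

Lemma poisson_pmf_neg l z : (z < 0)%Z -> poisson_pmf l z = 0.
Proof. intros H. unfold poisson_pmf. destruct (Z.ltb_spec z 0); auto; lia. Qed.

Lemma skellam_pmf_nat l1 l2 j :
  skellam_pmf l1 l2 (Z.of_nat j) = Series (fun b => poisson l1 (b + j) * poisson l2 b).
Proof.
  unfold skellam_pmf. apply Series_ext. intro k.
  rewrite <- Nat2Z.inj_add, !poisson_pmf_nat. reflexivity.
Qed.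

Lemma skellam_pmf_neg l1 l2 i :
  skellam_pmf l1 l2 (- Z.of_nat (S i))%Z = Series (fun a => poisson l1 a * poisson l2 (S i + a)).
Proof.
  unfold skellam_pmf. rewrite (Series_incr_n_aux _ (S i)).
  - apply Series_ext. intro k.
    replace (Z.of_nat (S i + k) + - Z.of_nat (S i))%Z with (Z.of_nat k) by lia.
    rewrite !poisson_pmf_nat. reflexivity.
  - intros k Hk. rewrite poisson_pmf_neg by lia. ring.
Qed.

Lemma skellam_pmf_ge0 l1 l2 j : 0 <= l1 -> 0 <= l2 -> 0 <= skellam_pmf l1 l2 j.
Proof.
  intros H1 H2.
  assert (Hp : forall l a, 0 <= l -> 0 <= poisson l a <= 1) by (split; auto using poisson_ge0, poisson_le1).
  destruct (Z_lt_le_dec j 0).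
  - replace j with (- Z.of_nat (S (Z.to_nat (- j - 1))))%Z by lia. rewrite skellam_pmf_neg.
    apply Series_poisson_mul_ge0 with 1; auto.
  - replace j with (Z.of_nat (Z.to_nat j)) by lia. rewrite skellam_pmf_nat.
    rewrite (Series_ext _ (fun b => poisson l2 b * poisson l1 (b + Z.to_nat j))) by (intro; ring).
    apply Series_poisson_mul_ge0 with 1; auto.
Qed.

Lemma skellam_pmf_0_pos l1 l2 : 0 <= l1 -> 0 <= l2 -> 0 < skellam_pmf l1 l2 0.
Proof.
  intros H1 H2. change 0%Z with (Z.of_nat 0). rewrite skellam_pmf_nat.
  eapply Rlt_le_trans; [|apply (term_le_Series _ 0)].
  - unfold poisson. simpl. pose proof (exp_pos (-l1)). pose proof (exp_pos (-l2)).
    apply Rmult_lt_0_compat; lra.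
  - intro; apply Rmult_le_pos; apply poisson_ge0; auto.
  - apply ex_series_ext_R with (fun b => poisson l2 b * poisson l1 (b + 0)).
    + intro; ring.
    + apply ex_series_poisson_mul with 1; auto.
      intro. rewrite Rabs_pos_eq by (apply poisson_ge0; auto). apply poisson_le1; auto.
Qed.

Lemma ex_series_skellam_pmf_nat l1 l2 : 0 <= l1 -> 0 <= l2 ->
  ex_series (fun j => skellam_pmf l1 l2 (Z.of_nat j)).
Proof.
  intros H1 H2. apply ex_series_ext_R with (fun j => Series (fun b => poisson l2 b * poisson l1 (b + j))).
  - intro. rewrite skellam_pmf_nat. apply Series_ext. intro; ring.
  - apply ex_series_column_sums; auto using poisson_ge0, ex_series_poisson, ex_series_poisson_shift,
      Series_poisson_shift_le1.
Qed.

Lemma ex_series_skellam_pmf_neg l1 l2 : 0 <= l1 -> 0 <= l2 ->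
  ex_series (fun i => skellam_pmf l1 l2 (- Z.of_nat (S i))%Z).
Proof.
  intros H1 H2. apply ex_series_ext_R with (fun i => Series (fun a => poisson l1 a * poisson l2 (S a + i))).
  - intro. rewrite skellam_pmf_neg. apply Series_ext. intro. do 2 f_equal. lia.
  - apply (ex_series_column_sums (poisson l1) (fun a i => poisson l2 (S a + i)));
      auto using poisson_ge0, ex_series_poisson, ex_series_poisson_shift, Series_poisson_shift_le1.
Qed.

Lemma sumZ_skellam_pmf_mul l1 l2 (g : Z -> R) Bd : 0 <= l1 -> 0 <= l2 -> (forall z, Rabs (g z) <= Bd) ->
  sumZ (fun j => skellam_pmf l1 l2 j * g j) =
  Series (fun a => poisson l1 a * Series (fun b => poisson l2 b * g (Z.of_nat a - Z.of_nat b)%Z)).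
Proof.
  intros H1 H2 Hg.
  assert (HB : 0 <= Bd). { eapply Rle_trans; [apply Rabs_pos|apply (Hg 0%Z)]. }
  set (h := fun a b => poisson l1 a * (poisson l2 b * g (Z.of_nat a - Z.of_nat b)%Z)).
  assert (Hh : forall a b, Rabs (h a b) <= Bd * poisson l1 a * poisson l2 b).
  { intros a b. unfold h. rewrite !Rabs_mult, !(Rabs_pos_eq (poisson _ _)) by (apply poisson_ge0; auto).
    pose proof (Hg (Z.of_nat a - Z.of_nat b)%Z).
    pose proof (poisson_ge0 l1 a H1). pose proof (poisson_ge0 l2 b H2).
    replace (Bd * poisson l1 a * poisson l2 b) with (poisson l1 a * (poisson l2 b * Bd)) by ring.
    apply Rmult_le_compat_l; auto. apply Rmult_le_compat_l; auto. }
  transitivity (Series (fun a => Series (h a))).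
  2:{ apply Series_ext. intro a. rewrite <- Series_scal_l. reflexivity. }
  rewrite (Series_split_triangles h Bd (poisson l1) (poisson l2)); auto using poisson_ge0, ex_series_poisson.
  unfold sumZ. f_equal.
  - rewrite (Series_comm_row_dominated (fun b j => h (b + j)%nat b) Bd (poisson l2)
               (fun b j => poisson l1 (b + j)));
      auto using poisson_ge0, ex_series_poisson, ex_series_poisson_shift, Series_poisson_shift_le1.
    2:{ intros b j. rewrite Hh. right; ring. }
    apply Series_ext. intro j. rewrite skellam_pmf_nat, <- Series_scal_r. apply Series_ext. intro b.
    unfold h. replace (Z.of_nat (b + j) - Z.of_nat b)%Z with (Z.of_nat j) by lia. ring.
  - rewrite (Series_comm_row_dominated (fun a i => h a (S a + i)%nat) Bd (poisson l1)
               (fun a i => poisson l2 (S a + i)));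
      auto using poisson_ge0, ex_series_poisson, ex_series_poisson_shift, Series_poisson_shift_le1.
    apply Series_ext. intro i. rewrite skellam_pmf_neg, <- Series_scal_r. apply Series_ext. intro a.
    unfold h. replace (Z.of_nat a - Z.of_nat (S a + i))%Z with (- Z.of_nat (S i))%Z by lia.
    replace (S a + i)%nat with (S i + a)%nat by lia. ring.
Qed.

Lemma sumZ_ext (u v : Z -> R) : (forall t, u t = v t) -> sumZ u = sumZ v.
Proof. intros H. unfold sumZ. f_equal; apply Series_ext; auto. Qed.

Lemma sumZ_div (u : Z -> R) (C : R) : sumZ (fun t => u t / C) = sumZ u / C.
Proof. unfold sumZ, Rdiv. rewrite !Series_scal_r. ring. Qed.

Definition summableZ (v : Z -> R) :=
  ex_series (fun k => v (Z.of_nat k)) /\ ex_series (fun k => v (- Z.of_nat (S k))%Z).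

Lemma sumZ_ge0 (v : Z -> R) : summableZ v -> (forall t, 0 <= v t) -> 0 <= sumZ v.
Proof.
  intros [A1 A2] Hv. unfold sumZ.
  apply Rplus_le_le_0_compat; apply Series_ge0; auto.
Qed.
Lemma summableZ_ext u v : (forall t, u t = v t) -> summableZ u -> summableZ v.
Proof.
  intros H [A1 A2]. split.
  - apply ex_series_ext_R with (2:=A1); intro; auto.
  - apply ex_series_ext_R with (2:=A2); intro; auto.
Qed.

Lemma sumZ_shift_succ v : summableZ v ->
  summableZ (fun t => v (t + 1)%Z) /\ sumZ (fun t => v (t + 1)%Z) = sumZ v.
Proof.
  intros [A1 A2].
  assert (P1 : ex_series (fun k => v (Z.of_nat k + 1)%Z)).
  { apply (proj1 (ex_series_incr_1 (V:=R_NormedModule) (fun k => v (Z.of_nat k)))) in A1.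
    eapply ex_series_ext_R; [|exact A1].
    intro k; cbv beta; f_equal; lia. }
  assert (P2 : ex_series (fun k => v (- Z.of_nat (S k) + 1)%Z)).
  { apply (proj2 (ex_series_incr_1 (V:=R_NormedModule) (fun k => v (- Z.of_nat (S k) + 1)%Z))).
    eapply ex_series_ext_R; [|exact A2].
    intro k; cbv beta; f_equal; lia. }
  split. split; auto.
  unfold sumZ. rewrite (Series_incr_1 (fun k => v (Z.of_nat k))) by auto.
  rewrite (Series_incr_1 (fun k => v (- Z.of_nat (S k) + 1)%Z)) by auto.
  rewrite (Series_ext (fun k => v (Z.of_nat k + 1)%Z) (fun k => v (Z.of_nat (S k)))).
  rewrite (Series_ext (fun k => v (- Z.of_nat (S (S k)) + 1)%Z) (fun k => v (- Z.of_nat (S k))%Z)).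
  replace (- Z.of_nat 1 + 1)%Z with 0%Z by lia. simpl. ring.
  intro; cbv beta; f_equal; lia. intro; cbv beta; f_equal; lia.
Qed.

Lemma sumZ_shift_pred v : summableZ v ->
  summableZ (fun t => v (t - 1)%Z) /\ sumZ (fun t => v (t - 1)%Z) = sumZ v.
Proof.
  intros [A1 A2].
  assert (P1 : ex_series (fun k => v (Z.of_nat k - 1)%Z)).
  { apply (proj2 (ex_series_incr_1 (V:=R_NormedModule) (fun k => v (Z.of_nat k - 1)%Z))).
    eapply ex_series_ext_R; [|exact A1].
    intro k; cbv beta; f_equal; lia. }
  assert (P2 : ex_series (fun k => v (- Z.of_nat (S k) - 1)%Z)).
  { apply (proj1 (ex_series_incr_1 (V:=R_NormedModule) (fun k => v (- Z.of_nat (S k))%Z))) in A2.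
    eapply ex_series_ext_R; [|exact A2].
    intro k; cbv beta; f_equal; lia. }
  split. split; auto.
  unfold sumZ. rewrite (Series_incr_1 (fun k => v (Z.of_nat k - 1)%Z)) by auto.
  rewrite (Series_incr_1 (fun k => v (- Z.of_nat (S k))%Z)) by auto.
  rewrite (Series_ext (fun k => v (Z.of_nat (S k) - 1)%Z) (fun k => v (Z.of_nat k))).
  rewrite (Series_ext (fun k => v (- Z.of_nat (S (S k)))%Z) (fun k => v (- Z.of_nat (S k) - 1)%Z)).
  replace (Z.of_nat 0 - 1)%Z with (- Z.of_nat 1)%Z by lia. ring.
  intro; cbv beta; f_equal; lia. intro; cbv beta; f_equal; lia.
Qed.

Lemma sumZ_shift (n : Z) : forall v, summableZ v ->
  summableZ (fun t => v (t + n)%Z) /\ sumZ (fun t => v (t + n)%Z) = sumZ v.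
Proof.
  induction n using Z.peano_ind; intros v Hv.
  - split. eapply summableZ_ext; [|exact Hv]. intro; cbv beta; f_equal; lia.
    apply sumZ_ext. intro; cbv beta; f_equal; lia.
  - destruct (IHn v Hv) as [Hw Ew].
    destruct (sumZ_shift_succ _ Hw) as [Hw' Ew'].
    split. eapply summableZ_ext; [|exact Hw']. intro; simpl; f_equal; lia.
    rewrite <- Ew, <- Ew'. apply sumZ_ext. intro; cbv beta; f_equal; lia.
  - destruct (IHn v Hv) as [Hw Ew].
    destruct (sumZ_shift_pred _ Hw) as [Hw' Ew'].
    split. eapply summableZ_ext; [|exact Hw']. intro; simpl; f_equal; lia.
    rewrite <- Ew, <- Ew'. apply sumZ_ext. intro; cbv beta; f_equal; lia.
Qed.

Lemma sgnZ_nat a : sgnZ (Z.of_nat a) = (-1) ^ a.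
Proof.
  induction a. reflexivity.
  rewrite Nat2Z.inj_succ. unfold sgnZ in *. rewrite Z.even_succ, <- Z.negb_even.
  simpl. destruct (Z.even (Z.of_nat a)); simpl; rewrite <- IHa; ring.
Qed.

Lemma sgnZ_sub a b : sgnZ (Z.of_nat a - Z.of_nat b) = (-1) ^ a * (-1) ^ b.
Proof.
  rewrite <- !sgnZ_nat. unfold sgnZ. rewrite Z.even_sub.
  destruct (Z.even (Z.of_nat a)), (Z.even (Z.of_nat b)); simpl; ring.
Qed.

Lemma Rabs_sgnZ j : Rabs (sgnZ j) = 1.
Proof. unfold sgnZ. destruct (Z.even j). apply Rabs_R1. apply Rabs_m1. Qed.

Lemma summableZ_skellam_pmf_mul l1 l2 (g : Z -> R) Bd : 0 <= l1 -> 0 <= l2 ->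
  (forall z, Rabs (g z) <= Bd) -> summableZ (fun j => skellam_pmf l1 l2 j * g j).
Proof.
  intros H1 H2 Hg.
  assert (Hb : forall j, Rabs (skellam_pmf l1 l2 j * g j) <= Bd * skellam_pmf l1 l2 j).
  { intro j. rewrite Rabs_mult, Rabs_pos_eq by (apply skellam_pmf_ge0; auto).
    rewrite Rmult_comm. apply Rmult_le_compat_r; auto. apply skellam_pmf_ge0; auto. }
  split.
  - apply ex_series_le_R with (fun k => Bd * skellam_pmf l1 l2 (Z.of_nat k)); auto.
    apply ex_series_scal_R, ex_series_skellam_pmf_nat; auto.
  - apply ex_series_le_R with (fun k => Bd * skellam_pmf l1 l2 (- Z.of_nat (S k))%Z); auto.
    apply ex_series_scal_R, ex_series_skellam_pmf_neg; auto.
Qed.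

Lemma sumZ_skellam_pmf_translate l1 l2 (g : Z -> R) Bd n : 0 <= l1 -> 0 <= l2 ->
  (forall z, Rabs (g z) <= Bd) ->
  sumZ (fun t => skellam_pmf l1 l2 (t - n)%Z * g t) = sumZ (fun j => skellam_pmf l1 l2 j * g (n + j)%Z).
Proof.
  intros H1 H2 Hg.
  assert (Hs : summableZ (fun j => skellam_pmf l1 l2 j * g (n + j)%Z))
    by (apply summableZ_skellam_pmf_mul with Bd; auto).
  destruct (sumZ_shift (- n) _ Hs) as [_ <-].
  apply sumZ_ext. intro t. do 3 f_equal; lia.
Qed.

(* The transform T(t) = sum_j (-1)^j f(j) x(t + j), written as
   E[(-1)^(X - Y) x(t + X - Y)] for independent Poisson [X] and [Y]. *)
Definition skellam_alt l1 l2 (x : Z -> R) (t : Z) : R :=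
  Series (fun a => poisson l1 a * Series (fun b => poisson l2 b *
     (sgnZ (Z.of_nat a - Z.of_nat b) * x (t + (Z.of_nat a - Z.of_nat b))%Z))).

Lemma sumZ_sgnZ_skellam_pmf l1 l2 (x : Z -> R) Bx t : 0 <= l1 -> 0 <= l2 ->
  (forall k, Rabs (x k) <= Bx) ->
  sumZ (fun j => sgnZ j * skellam_pmf l1 l2 j * x (t + j)%Z) = skellam_alt l1 l2 x t.
Proof.
  intros H1 H2 Hx.
  rewrite (sumZ_ext _ (fun j => skellam_pmf l1 l2 j * (sgnZ j * x (t + j)%Z))) by (intro; ring).
  apply (sumZ_skellam_pmf_mul l1 l2 (fun j => sgnZ j * x (t + j)%Z) Bx); auto.
  intro z. rewrite Rabs_mult, Rabs_sgnZ, Rmult_1_l. auto.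
Qed.

Lemma Rabs_skellam_alt_le l1 l2 (x : Z -> R) Bx t : 0 <= l1 -> 0 <= l2 ->
  (forall k, Rabs (x k) <= Bx) -> Rabs (skellam_alt l1 l2 x t) <= Bx.
Proof.
  intros H1 H2 Hx. unfold skellam_alt. apply Rabs_Series_poisson_mul_le; auto.
  intro a. apply Rabs_Series_poisson_mul_le; auto.
  intro b. rewrite Rabs_mult, Rabs_sgnZ, Rmult_1_l. auto.
Qed.

(* Averaging over the [Y]-variable of a second, independent Skellam sample
   cancels the [Y]-part of the transform. *)
Lemma Series_poisson_mul_skellam_alt l1 l2 (x : Z -> R) Bx m : 0 <= l1 -> 0 <= l2 ->
  (forall k, Rabs (x k) <= Bx) ->
  Series (fun d => poisson l2 d * skellam_alt l1 l2 x (m - Z.of_nat d)%Z) =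
  Series (fun a => (-1) ^ a * poisson l1 a * (exp (- (2 * l2)) * x (m + Z.of_nat a)%Z)).
Proof.
  intros H1 H2 Hx.
  assert (HB : 0 <= Bx). { eapply Rle_trans; [apply Rabs_pos|apply (Hx 0%Z)]. }
  set (W := fun d a => Series (fun b => (-1) ^ b * poisson l2 b * x (m + Z.of_nat a - Z.of_nat (d + b))%Z)).
  assert (HW : forall d a, Rabs (W d a) <= Bx).
  { intros. unfold W.
    rewrite (Series_ext _ (fun b => poisson l2 b * ((-1) ^ b * x (m + Z.of_nat a - Z.of_nat (d + b))%Z)))
      by (intro; ring).
    apply Rabs_Series_poisson_mul_le; auto. intro b. rewrite Rabs_mult, Rabs_pow_m1, Rmult_1_l. auto. }
  transitivity (Series (fun d => Series (fun a => poisson l2 d * ((-1) ^ a * poisson l1 a * W d a)))).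
  { apply Series_ext. intro d. rewrite Series_scal_l. f_equal.
    unfold skellam_alt, W. apply Series_ext. intro a.
    rewrite <- !Series_scal_l. apply Series_ext. intro b. rewrite sgnZ_sub.
    replace (m - Z.of_nat d + (Z.of_nat a - Z.of_nat b))%Z
      with (m + Z.of_nat a - Z.of_nat (d + b))%Z by lia.
    ring. }
  rewrite (Series_comm_product_dominated _ Bx (poisson l2) (poisson l1));
    auto using poisson_ge0, ex_series_poisson.
  - apply Series_ext. intro a.
    rewrite (Series_ext _ (fun d => ((-1) ^ a * poisson l1 a) * (poisson l2 d * W d a))) by (intro; ring).
    rewrite Series_scal_l. f_equal. unfold W.
    rewrite (Series_poisson_alternating_conv l2 Bx (fun s => x (m + Z.of_nat a - Z.of_nat s)%Z)); auto.
    do 2 f_equal. lia.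
  - intros d a. rewrite !Rabs_mult, Rabs_pow_m1, !Rabs_pos_eq by (apply poisson_ge0; auto).
    pose proof (HW d a). pose proof (poisson_ge0 l2 d H2). pose proof (poisson_ge0 l1 a H1).
    replace (Bx * poisson l2 d * poisson l1 a) with ((poisson l2 d * poisson l1 a) * Bx) by ring.
    replace (poisson l2 d * (1 * poisson l1 a * Rabs (W d a)))
      with ((poisson l2 d * poisson l1 a) * Rabs (W d a)) by ring.
    apply Rmult_le_compat_l; auto. apply Rmult_le_pos; auto.
Qed.

Lemma sumZ_skellam_pmf_skellam_alt l1 l2 (x : Z -> R) Bx n : 0 <= l1 -> 0 <= l2 ->
  (forall k, Rabs (x k) <= Bx) ->
  sumZ (fun j => skellam_pmf l1 l2 j * skellam_alt l1 l2 x (n + j)%Z) = exp (- (2 * (l1 + l2))) * x n.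
Proof.
  intros H1 H2 Hx.
  assert (HB : 0 <= Bx). { eapply Rle_trans; [apply Rabs_pos|apply (Hx 0%Z)]. }
  rewrite (sumZ_skellam_pmf_mul l1 l2 _ Bx) by (auto; intro; apply Rabs_skellam_alt_le; auto).
  transitivity (Series (fun c => poisson l1 c *
    Series (fun a => (-1) ^ a * poisson l1 a * (exp (- (2 * l2)) * x (n + Z.of_nat (c + a))%Z)))).
  { apply Series_ext. intro c. f_equal.
    rewrite (Series_ext _ (fun d => poisson l2 d * skellam_alt l1 l2 x (n + Z.of_nat c - Z.of_nat d)%Z))
      by (intro; do 2 f_equal; lia).
    rewrite (Series_poisson_mul_skellam_alt l1 l2 x Bx) by auto.
    apply Series_ext. intro a. rewrite Nat2Z.inj_add, Z.add_assoc. reflexivity. }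
  rewrite (Series_poisson_alternating_conv l1 (exp (- (2 * l2)) * Bx)
             (fun s => exp (- (2 * l2)) * x (n + Z.of_nat s)%Z)); auto.
  - replace (n + Z.of_nat 0)%Z with n by lia.
    replace (exp (- (2 * (l1 + l2)))) with (exp (- (2 * l1)) * exp (- (2 * l2)))
      by (rewrite <- exp_plus; f_equal; ring).
    ring.
  - intro s. rewrite Rabs_mult, (Rabs_pos_eq (exp _)) by (left; apply exp_pos).
    apply Rmult_le_compat_l; auto. left; apply exp_pos.
Qed.

Lemma skellam_alt_ge0_nonneg l1 l2 (x : Z -> R) Bx n : 0 <= l1 -> 0 <= l2 ->
  (forall k, Rabs (x k) <= Bx) -> (forall t, 0 <= skellam_alt l1 l2 x t) -> 0 <= x n.
Proof.
  intros H1 H2 Hx HT.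
  apply Rmult_le_reg_l with (exp (- (2 * (l1 + l2)))); [apply exp_pos|].
  rewrite Rmult_0_r, <- (sumZ_skellam_pmf_skellam_alt l1 l2 x Bx) by auto.
  apply sumZ_ge0.
  - apply summableZ_skellam_pmf_mul with Bx; auto. intro; apply Rabs_skellam_alt_le; auto.
  - intro j. apply Rmult_le_pos; auto. apply skellam_pmf_ge0; auto.
Qed.

Definition threshold_kernel (p : Z -> R) : alg :=
  fun t u => if Z.eqb u 0 then p t else if Z.eqb u 1 then 1 - p t else 0.

Lemma threshold_kernel_is_alg (p : Z -> R) : (forall t, 0 <= p t <= 1) -> is_alg (threshold_kernel p).
Proof.
  intros Hp t. split.
  - intro w. unfold threshold_kernel. destruct (Hp t).
    destruct (Z.eqb w 0); [lra|]. destruct (Z.eqb w 1); lra.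
  - assert (Hsupp : forall k, (1 < k)%nat -> threshold_kernel p t (Z.of_nat k) = 0).
    { intros k Hk. unfold threshold_kernel.
      destruct (Z.eqb_spec (Z.of_nat k) 0); [lia|]. destruct (Z.eqb_spec (Z.of_nat k) 1); [lia|]. auto. }
    assert (Hneg : forall k, threshold_kernel p t (- Z.of_nat (S k))%Z = 0).
    { intro k. unfold threshold_kernel.
      destruct (Z.eqb_spec (- Z.of_nat (S k))%Z 0); [lia|].
      destruct (Z.eqb_spec (- Z.of_nat (S k))%Z 1); [lia|]. auto. }
    exists 1, 0. split; [|split].
    + pose proof (is_series_eventually_zero _ 1 Hsupp) as Hs.
      replace (sum_f_R0 _ 1) with 1 in Hs by (simpl; unfold threshold_kernel; simpl; ring).
      exact Hs.
    + pose proof (is_series_eventually_zero _ 0 (fun k _ => Hneg k)) as Hs.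
      replace (sum_f_R0 _ 0) with 0 in Hs by (symmetry; exact (Hneg 0%nat)).
      exact Hs.
    + ring.
Qed.

Lemma threshold_skellam_alt_is_alg l1 l2 (x : Z -> R) Bx : 0 <= l1 -> 0 <= l2 ->
  (forall k, Rabs (x k) <= Bx) -> (forall t, 0 <= skellam_alt l1 l2 x t) ->
  is_alg (threshold_kernel (fun t => skellam_alt l1 l2 x t / (Bx + 1))).
Proof.
  intros H1 H2 Hx HT.
  assert (HB : 0 <= Bx). { eapply Rle_trans; [apply Rabs_pos|apply (Hx 0%Z)]. }
  apply threshold_kernel_is_alg. intro t. split.
  - apply Rdiv_le_0_compat; auto. lra.
  - apply Rmult_le_reg_r with (Bx + 1); [lra|]. unfold Rdiv. rewrite Rmult_assoc, Rinv_l by lra.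
    pose proof (Rabs_skellam_alt_le l1 l2 x Bx t H1 H2 Hx) as Hle.
    apply Rabs_le_between in Hle. lra.
Qed.

Lemma postproc_threshold_skellam_mech l1 l2 (x : Z -> R) Bx C n : 0 <= l1 -> 0 <= l2 ->
  (forall k, Rabs (x k) <= Bx) -> 0 < C ->
  postproc (threshold_kernel (fun t => skellam_alt l1 l2 x t / C)) (skellam_mech l1 l2) n 0%Z =
  exp (- (2 * (l1 + l2))) * x n / C.
Proof.
  intros H1 H2 Hx HC.
  assert (HB : 0 <= Bx). { eapply Rle_trans; [apply Rabs_pos|apply (Hx 0%Z)]. }
  unfold postproc, skellam_mech, threshold_kernel. simpl.
  rewrite (sumZ_skellam_pmf_translate l1 l2 _ (Bx / C)); auto.
  - rewrite <- (sumZ_skellam_pmf_skellam_alt l1 l2 x Bx) by auto.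
    rewrite <- sumZ_div. apply sumZ_ext. intro j. unfold Rdiv. ring.
  - intro z. unfold Rdiv. rewrite Rabs_mult, (Rabs_pos_eq (/ C)) by (left; apply Rinv_0_lt_compat; auto).
    apply Rmult_le_compat_r; [left; apply Rinv_0_lt_compat; auto|]. apply Rabs_skellam_alt_le; auto.
Qed.

Theorem theorem7 (l1 l2 : R) (x : Z -> R) :
  0 < l1 -> 0 < l2 ->
  (exists B : R, forall k : Z, Rabs (x k) <= B) ->
  (forall k : Z, 0 <= sumZ (fun j : Z => sgnZ j * skellam_pmf l1 l2 j * x (k + j)%Z)) ->
  rowcone (fun M => M = skellam_mech l1 l2) x.
Proof.
  intros H1 H2 [Bx Hx] Hpos.
  assert (H1' : 0 <= l1) by lra. assert (H2' : 0 <= l2) by lra.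
  assert (HB : 0 <= Bx). { eapply Rle_trans; [apply Rabs_pos|apply (Hx 0%Z)]. }
  assert (HT : forall t, 0 <= skellam_alt l1 l2 x t).
  { intro t. rewrite <- (sumZ_sgnZ_skellam_pmf l1 l2 x Bx) by auto. apply Hpos. }
  set (C := Bx + 1). assert (HC : 0 < C) by (unfold C; lra).
  set (K := exp (- (2 * (l1 + l2)))). assert (HK : 0 < K) by apply exp_pos.
  set (M := postproc (threshold_kernel (fun t => skellam_alt l1 l2 x t / C)) (skellam_mech l1 l2)).
  assert (HM : CNF (fun M => M = skellam_mech l1 l2) M).
  { apply CNF_post; [apply threshold_skellam_alt_is_alg|apply CNF_base]; auto. }
  assert (HMx : forall n, M n 0%Z = K * x n / C)
    by (intro n; apply postproc_threshold_skellam_mech with Bx; auto).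
  destruct (classic (exists n, 0 < x n)) as [[n0 Hn0] | Hzero].
  - exists (C / K), M, 0%Z. split; [|split; [|split]].
    + left. apply Rdiv_lt_0_compat; auto.
    + exact HM.
    + exists n0. rewrite HMx. apply Rdiv_lt_0_compat; auto. apply Rmult_lt_0_compat; auto.
    + intro n. rewrite HMx. field. split; lra.
  - exists 0, (skellam_mech l1 l2), 0%Z. split; [lra|split; [apply CNF_base; reflexivity|split]].
    + exists 0%Z. apply skellam_pmf_0_pos; auto.
    + intro n. destruct (skellam_alt_ge0_nonneg l1 l2 x Bx n H1' H2' Hx HT) as [Hlt | <-].
      * exfalso. apply Hzero. eauto.
      * ring.
Qed.
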